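(* Let $n$ be a positive integer and $s$ a positive divisor of $n$. Let $D(n,s)$ be the set of positive divisors of $n$ that do not divide $s$, and let $M(n,s)$ be the square matrix with rows and columns indexed by $D(n,s)$ and $(d_1,d_2)$-entry $\gcd(d_1,d_2)-\gcd(d_1,d_2,s)$. Then $$\det M(n,s)=\prod_{d\in D(n,s)}\varphi(d),$$ where $\varphi$ is Euler's totient function. In particular, $M(n,s)$ is invertible.
   Context: The determinant of an empty matrix is taken to be $1$. *)

From HB Require Import structures.
From mathcomp Require Import all_boot all_order all_algebra.
Set Implicit Arguments. Unset Strict Implicit. Unset Printing Implicit Defensive.
Import Order.TTheory GRing.Theory Num.Theory.

Definition Dns (n s : nat) : seq nat := [seq d <- divisors n | ~~ (d %| s)].

Definition Mns (n s : nat) : 'M[rat]_(size (Dns n s)) :=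
  \matrix_(i, j) (((gcdn (nth 0%N (Dns n s) i) (nth 0%N (Dns n s) j))%:R
                  - (gcdn (gcdn (nth 0%N (Dns n s) i) (nth 0%N (Dns n s) j)) s)%:R) : rat).

(* Smith's factorization: the matrix (gcd(d1,d2) - gcd(d1,d2,s)) over D(n,s) equals Z diag(phi) Z^T,
   where Z is the divisibility matrix of D(n,s), because by Gauss's formula sum_{e | m} phi(e) = m
   the divisors e of gcd(d1,d2) that do not divide s contribute exactly gcd(d1,d2) - gcd(d1,d2,s).
   Listing D(n,s) increasingly makes Z unitriangular, so det M(n,s) = prod phi(d) > 0. *)
From HB Require Import structures.
From mathcomp Require Import all_boot all_order all_algebra.
From mathcomp Require Import cyclic zify.
Import Order.TTheory GRing.Theory Num.Theory.

Lemma sum_totient_divisors_dvd n m : (0 < n)%N -> (m %| n)%N ->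
  (\sum_(e <- divisors n | e %| m) totient e)%N = m.
Proof.
move=> n_gt0 dvd_mn; have m_gt0 : (0 < m)%N := dvdn_gt0 n_gt0 dvd_mn.
rewrite -[RHS](sum_totient_dvd m) -[LHS]big_filter.
rewrite -(big_mkord (fun e => e %| m)) /index_iota subn0 -[RHS]big_filter.
apply: perm_big; apply: uniq_perm; rewrite ?filter_uniq ?divisors_uniq ?iota_uniq //.
move=> e; rewrite !mem_filter mem_iota /= add0n -dvdn_divisors //.
case: (boolP (e %| m)) => //= dvd_em.
by rewrite (dvdn_trans dvd_em dvd_mn) ltnS dvdn_leq.
Qed.

Lemma sum_totient_Dns_dvd n s g : (0 < n)%N -> (g %| n)%N ->
  (\sum_(e <- Dns n s | e %| g) totient e)%N = (g - gcdn g s)%N.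
Proof.
move=> n_gt0 dvd_gn.
have dvd_gsn : (gcdn g s %| n)%N := dvdn_trans (dvdn_gcdl _ _) dvd_gn.
have split_s : (\sum_(e <- divisors n | e %| g) totient e =
    \sum_(e <- divisors n | e %| gcdn g s) totient e +
    \sum_(e <- Dns n s | e %| g) totient e)%N.
  rewrite (bigID (fun e => e %| s)) /= big_filter_cond; congr (_ + _)%N.
    by apply: eq_bigl => e; rewrite dvdn_gcd.
  by apply: eq_bigl => e; rewrite andbC.
by move: split_s; rewrite !sum_totient_divisors_dvd //; lia.
Qed.

Local Open Scope ring_scope.

Definition dvd_mx (R : pzSemiRingType) (D : seq nat) : 'M[R]_(size D) :=
  \matrix_(i, j) (nth 0%N D j %| nth 0%N D i)%:R.

Lemma dvd_mx_diag_mul_tr (R : comPzSemiRingType) (D : seq nat) (f : nat -> R) :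
  dvd_mx R D *m diag_mx (\row_j f (nth 0%N D j)) *m (dvd_mx R D)^T =
  \matrix_(i, j) \sum_(e <- D | (e %| gcdn (nth 0%N D i) (nth 0%N D j))%N) f e.
Proof.
apply/matrixP => i j; rewrite mul_mx_diag !mxE (big_nth 0%N) big_mkord [RHS]big_mkcond.
apply: eq_bigr => k _; rewrite /dvd_mx !mxE dvdn_gcd.
by case: (_ %| _)%N; case: (_ %| _)%N; rewrite ?mul1r ?mulr1 ?mul0r ?mulr0.
Qed.

Lemma det_dvd_mx (R : comPzRingType) (D : seq nat) :
  sorted ltn D -> 0%N \notin D -> \det (dvd_mx R D) = 1.
Proof.
move=> sorted_D D_neq0; rewrite det_trig.
  by apply: big1 => i _; rewrite mxE dvdnn.
apply/is_trig_mxP => i j lt_ij; rewrite mxE.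
have lt_Dij : (nth 0 D i < nth 0 D j)%N.
  by apply: (sorted_ltn_nth ltn_trans 0%N sorted_D); rewrite ?inE ?ltn_ord.
have Di_gt0 : (0 < nth 0 D i)%N.
  by rewrite lt0n; apply: contraNneq D_neq0 => <-; apply: mem_nth.
by case: (boolP (_ %| _)%N) => // /(dvdn_leq Di_gt0); rewrite leqNgt lt_Dij.
Qed.

Lemma Mns_dvd_mx_factor n s : (0 < n)%N ->
  Mns n s = dvd_mx rat (Dns n s) *m diag_mx (\row_j (totient (nth 0%N (Dns n s) j))%:R)
            *m (dvd_mx rat (Dns n s))^T.
Proof.
move=> n_gt0; rewrite (@dvd_mx_diag_mul_tr _ _ (fun d => (totient d)%:R)).
apply/matrixP => i j; rewrite !mxE -natr_sum.
set g := gcdn _ _.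
have dvd_gn : (g %| n)%N.
  apply: dvdn_trans (dvdn_gcdl _ _) _.
  by have := mem_nth 0%N (ltn_ord i); rewrite mem_filter -dvdn_divisors // => /andP[].
have g_gt0 : (0 < g)%N := dvdn_gt0 n_gt0 dvd_gn.
by rewrite sum_totient_Dns_dvd // natrB // dvdn_leq // dvdn_gcdl.
Qed.

Theorem lemma4p5 (n s : nat) (hn : (0 < n)%N) (hs : (0 < s)%N) (hsn : (s %| n)%N) :
  \det (Mns n s) = \prod_(d <- Dns n s) ((totient d)%:R : rat)
  /\ Mns n s \in unitmx.
Proof.
have sorted_D : sorted ltn (Dns n s).
  exact: sorted_filter ltn_trans _ _ (sorted_divisors_ltn n).
have D_neq0 : 0%N \notin Dns n s.
  by rewrite mem_filter -dvdn_divisors // !dvd0n (gtn_eqF hn) andbF.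
have det_M : \det (Mns n s) = \prod_(d <- Dns n s) ((totient d)%:R : rat).
  rewrite Mns_dvd_mx_factor // !det_mulmx det_tr det_dvd_mx // mul1r mulr1 det_diag.
  by rewrite (big_nth 0%N) big_mkord; apply: eq_bigr => i _; rewrite mxE.
split => //; rewrite unitmxE det_M unitfE prodf_seq_neq0.
apply/allP => d d_in_D /=; rewrite pnatr_eq0 -lt0n totient_gt0 lt0n.
by apply: contraNneq D_neq0 => <-.
Qed.
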